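(* Let $G$ be a connected graph on $n\ge2$ vertices, $\alpha\in\mathbb{R}$, with vertices labeled so that, writing $s_k=({}^\alpha\mathbb{M})_k+\mathbb{D}_k$, we have $s_1\ge s_2\ge\cdots\ge s_n$. Let $S=\min_{1\le i\le n}\mathbb{D}_i$ and $T=\min_{1\le i\ne j\le n}d_{ij}\mathbb{D}_j^\alpha/\mathbb{D}_i^\alpha$. Then \[\rho(\mathbb{DQ}(G))\ge \frac{s_n+S-T+\sqrt{(s_n-S+T)^2+4T\sum_{k=1}^{n-1}(s_k-s_n)}}{2}.\] Equality holds if and only if $s_1=\cdots=s_n$, or for some $2\le t\le n$: (i) $\mathbb{D}_k=S$ for $1\le k\le t-1$; (ii) $d_{kl}\mathbb{D}_l^\alpha/\mathbb{D}_k^\alpha=T$ for all $1\le k\le n$, $1\le l\le t-1$, $k\ne l$; (iii) $s_t=\cdots=s_n$.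
   Context: $\mathbb{D}(G)=(d_{ij})$ is the distance matrix of $G$, $\mathbb{D}_i=\sum_j d_{ij}$ the transmission of $v_i$, and $\mathbb{DQ}(G)=\mathrm{diag}(\mathbb{D}_1,\dots,\mathbb{D}_n)+\mathbb{D}(G)$ the distance signless Laplacian matrix. $({}^\alpha\mathbb{M})_i=\frac{\sum_{j=1}^n d_{ij}\mathbb{D}_j^\alpha}{\mathbb{D}_i^\alpha}$ is the generalized average transmission. $\rho$ is the spectral radius. *)

From Stdlib Require Import Reals Lra Lia List Arith Bool.
Import ListNotations.
Open Scope R_scope.

(* Vertices are 0 .. n-1; a simple graph is a boolean adjacency relation,
   symmetric and irreflexive on the vertex set. *)

Fixpoint reachb (adj : nat -> nat -> bool) (n k i j : nat) : bool :=
  match k with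
  | O => Nat.eqb i j
  | S k' => reachb adj n k' i j
            || existsb (fun m => adj i m && reachb adj n k' m j) (seq 0 n)
  end.

Definition connected (adj : nat -> nat -> bool) (n : nat) : Prop :=
  forall i j, (i < n)%nat -> (j < n)%nat -> exists k, reachb adj n k i j = true.

(* first k in start, start+1, ..., start+fuel-1 with f k = true, else start+fuel *)
Fixpoint first_true (f : nat -> bool) (fuel start : nat) : nat :=
  match fuel with
  | O => start
  | S fuel' => if f start then start else first_true f fuel' (S start)
  end.

(* graph distance d_ij: least length of a walk from i to j
   (in a connected graph on n vertices it is < n) *)
Definition dist (adj : nat -> nat -> bool) (n i j : nat) : nat :=
  first_true (fun k => reachb adj n k i j) n 0.

Fixpoint rsum (n : nat) (f : nat -> R) : R :=
  match n with
  | O => 0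
  | S n' => rsum n' f + f n'
  end.

Definition trans (adj : nat -> nat -> bool) (n i : nat) : R :=
  rsum n (fun j => INR (dist adj n i j)).

Definition wgt (adj : nat -> nat -> bool) (n : nat) (alpha : R) (i j : nat) : R :=
  INR (dist adj n i j) * Rpower (trans adj n j) alpha / Rpower (trans adj n i) alpha.

Definition gavg (adj : nat -> nat -> bool) (n : nat) (alpha : R) (i : nat) : R :=
  rsum n (fun j => wgt adj n alpha i j).

Definition sval (adj : nat -> nat -> bool) (n : nat) (alpha : R) (k : nat) : R :=
  gavg adj n alpha k + trans adj n k.

Definition minS (adj : nat -> nat -> bool) (n : nat) : R :=
  fold_right Rmin (trans adj n 0) (map (trans adj n) (seq 0 n)).

(* T = min_{i <> j} d_ij D_j^alpha / D_i^alpha  (n >= 2; default pair (0,1)) *)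
Definition minT (adj : nat -> nat -> bool) (n : nat) (alpha : R) : R :=
  fold_right Rmin (wgt adj n alpha 0 1)
    (map (fun p => wgt adj n alpha (fst p) (snd p))
       (filter (fun p => negb (Nat.eqb (fst p) (snd p)))
          (list_prod (seq 0 n) (seq 0 n)))).

Definition DQ (adj : nat -> nat -> bool) (n : nat) (i j : nat) : R :=
  (if Nat.eqb i j then trans adj n i else 0) + INR (dist adj n i j).

Definition is_eigenvalue (n : nat) (M : nat -> nat -> R) (lam : R) : Prop :=
  exists x : nat -> R,
    (exists i, (i < n)%nat /\ x i <> 0) /\
    forall i, (i < n)%nat -> rsum n (fun j => M i j * x j) = lam * x i.

(* r is the spectral radius of M (M real symmetric here, so all eigenvalues
   are real) *)
Definition is_spectral_radius (n : nat) (M : nat -> nat -> R) (r : R) : Prop :=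
  (exists lam, is_eigenvalue n M lam /\ Rabs lam = r) /\
  (forall lam, is_eigenvalue n M lam -> Rabs lam <= r).

(* Write DQ = diag(D) + d and p_i = D_i^alpha.  Then DQ is similar, through
   diag(p), to B = diag(D) + W with W_ij = d_ij p_j / p_i, whose row sums are
   the s_i.  Put v_k = 1 + (s_k - s_n) / (lam - S + T), where lam is the
   bound.  Because lam solves (lam - s_n)(lam - S + T) = T sum_k (s_k - s_n),
   (lam - S + T)(B v - lam v)_i equals
   (D_i - S)(s_i - s_n) + sum_j (W_ij - T [j <> i]) (s_j - s_n) >= 0.
   So u = p . v > 0 satisfies DQ u >= lam u entrywise. *)

Set Warnings "-notation-overridden,-ambiguous-paths,-parsing,-coercions,-require-in-module".
From Pilot Require Import Defs.
From Stdlib Require Import Reals Lra Lia List Classical Bool Arith Wf_nat.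

(* The one genuinely linear-algebraic input: a square real matrix is either
   singular or invertible. *)
Module MatrixFacts.
From mathcomp Require Import all_boot all_algebra.
From mathcomp Require Import Rstruct.
Import GRing.Theory.
Local Open Scope ring_scope.

Lemma rsum_big (n : nat) (f : nat -> R) : rsum n f = (\sum_(i < n) f i)%R.
Proof.
elim: n => [|n IH]; first by rewrite big_ord0.
by rewrite big_ord_recr /= IH.
Qed.

Lemma singular_or_invertible (n : nat) (P : nat -> nat -> R) :
  (exists x : nat -> R, (exists i, (i < n)%coq_nat /\ x i <> 0%R) /\
      forall i, (i < n)%coq_nat -> rsum n (fun j => (P i j * x j)%R) = 0%R) \/
  (exists N : nat -> nat -> R, forall (x : nat -> R) i, (i < n)%coq_nat ->
      x i = rsum n (fun j => (N i j * rsum n (fun k => P j k * x k))%R)).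
Proof.
pose A : 'M[R]_n := \matrix_(i < n, j < n) P j i.
have [/eqP/det0P [v nzv vA] | nz] := eqVneq (\det A) 0%R.
- left; exists (fun j => if (j < n)%N =P true is ReflectT h then v ord0 (Ordinal h) else 0%R).
  split.
  + apply: NNPP => H; move/negP: nzv; apply; apply/eqP/matrixP => a b.
    rewrite [a]ord1 mxE.
    have hb := ltn_ord b.
    case: (boolP (v 0 b == 0%R)) => [/eqP -> //|hne]; exfalso; apply: H.
    exists (nat_of_ord b); split; first by apply/ltP.
    case: eqP => [h|]; last by rewrite hb.
    rewrite (_ : Ordinal h = b); [exact/eqP | exact: ord_inj].
  + move=> i /ltP hi; rewrite rsum_big.
    have := congr1 (fun M : 'rV_n => M ord0 (Ordinal hi)) vA.
    rewrite !mxE => E; apply: etrans _ E; apply: eq_bigr => j _.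
    rewrite mxE /=; case: eqP => [h|]; last by rewrite ltn_ord.
    rewrite (_ : Ordinal h = j); first by rewrite mulrC. by apply/val_inj.
- right.
  have uA : A \in unitmx by rewrite unitmxE unitfE.
  pose B := invmx A.
  exists (fun i j => if (i < n)%N =P true is ReflectT hi then
                       if (j < n)%N =P true is ReflectT hj then B (Ordinal hj) (Ordinal hi) else 0%R
                     else 0%R).
  move=> x i /ltP hi.
  pose xr : 'rV[R]_n := \row_(k < n) x k.
  have := mulmxK uA xr.
  move/(congr1 (fun M : 'rV_n => M ord0 (Ordinal hi))).
  rewrite !mxE => <-.
  rewrite rsum_big; apply: eq_bigr => j _.
  case: eqP => [h|]; last by rewrite hi.
  case: eqP => [h'|]; last by rewrite ltn_ord.
  rewrite (_ : Ordinal h' = j); last by apply: ord_inj.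
  rewrite (_ : Ordinal h = Ordinal hi); last by apply: ord_inj.
  rewrite mulrC; congr (_ * _)%R.
  rewrite mxE rsum_big; apply: eq_bigr => k _; rewrite !mxE mulrC //.
Qed.
End MatrixFacts.

Open Scope R_scope.

Lemma rsum_ext n f g : (forall i, (i < n)%nat -> f i = g i) -> rsum n f = rsum n g.
Proof.
  induction n; simpl; intros H; auto.
  rewrite IHn by (intros; apply H; lia). rewrite H by lia. reflexivity.
Qed.

Lemma rsum_plus n f g : rsum n (fun i => f i + g i) = rsum n f + rsum n g.
Proof. induction n; simpl; [lra|]. rewrite IHn. lra. Qed.

Lemma rsum_minus n f g : rsum n (fun i => f i - g i) = rsum n f - rsum n g.
Proof. induction n; simpl; [lra|]. rewrite IHn. lra. Qed.

Lemma rsum_scal n c f : rsum n (fun i => c * f i) = c * rsum n f.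
Proof. induction n; simpl; [lra|]. rewrite IHn. lra. Qed.

Lemma rsum_scalr n c f : rsum n (fun i => f i * c) = rsum n f * c.
Proof. induction n; simpl; [lra|]. rewrite IHn. lra. Qed.

Lemma rsum_zero n : rsum n (fun _ => 0) = 0.
Proof. induction n; simpl; [lra|]. rewrite IHn. lra. Qed.

Lemma rsum_le n f g : (forall i, (i < n)%nat -> f i <= g i) -> rsum n f <= rsum n g.
Proof.
  induction n; simpl; intros H; [lra|].
  assert (f n <= g n) by (apply H; lia).
  assert (rsum n f <= rsum n g) by (apply IHn; intros; apply H; lia). lra.
Qed.

Lemma rsum_nonneg n f : (forall i, (i < n)%nat -> 0 <= f i) -> 0 <= rsum n f.
Proof. intros H. rewrite <- (rsum_zero n). apply rsum_le. auto. Qed.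

Lemma rsum_term n f k : (forall i, (i < n)%nat -> 0 <= f i) -> (k < n)%nat -> f k <= rsum n f.
Proof.
  induction n; simpl; intros H Hk; [lia|].
  assert (0 <= rsum n f) by (apply rsum_nonneg; intros; apply H; lia).
  destruct (Nat.eq_dec k n) as [->|Hne]; [lra|].
  assert (f k <= rsum n f) by (apply IHn; [intros; apply H; lia|lia]).
  assert (0 <= f n) by (apply H; lia). lra.
Qed.

Lemma rsum_zero_inv n f : (forall i, (i < n)%nat -> 0 <= f i) -> rsum n f <= 0 ->
  forall k, (k < n)%nat -> f k = 0.
Proof.
  intros H Hs k Hk. assert (f k <= rsum n f) by (apply rsum_term; auto).
  assert (0 <= f k) by auto. lra.
Qed.

Lemma rsum_single n k f : (k < n)%nat -> rsum n (fun j => if Nat.eqb j k then f j else 0) = f k.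
Proof.
  induction n; simpl; intros Hk; [lia|].
  destruct (Nat.eq_dec k n) as [->|Hne].
  - rewrite Nat.eqb_refl, (rsum_ext n _ (fun _ => 0)), rsum_zero; [lra|].
    intros i Hi. destruct (Nat.eqb_spec i n); [lia|auto].
  - rewrite IHn by lia. destruct (Nat.eqb_spec n k); [lia|]. lra.
Qed.

Lemma rsum_abs n f : Rabs (rsum n f) <= rsum n (fun i => Rabs (f i)).
Proof.
  induction n; simpl; [rewrite Rabs_R0; lra|].
  eapply Rle_trans; [apply Rabs_triang|]. lra.
Qed.

Definition mv n (Q : nat -> nat -> R) (x : nat -> R) i := rsum n (fun j => Q i j * x j).
Definition qf n (Q : nat -> nat -> R) (x : nat -> R) := rsum n (fun i => x i * mv n Q x i).
Definition nrm n (x : nat -> R) := rsum n (fun i => x i * x i).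
Definition symm n (Q : nat -> nat -> R) := forall i j, (i < n)%nat -> (j < n)%nat -> Q i j = Q j i.

Definition basis_vec (j k : nat) : R := if Nat.eqb k j then 1 else 0.

Lemma nrm_nonneg n x : 0 <= nrm n x.
Proof. apply rsum_nonneg. intros. nra. Qed.

Lemma sq_le_nrm n x k : (k < n)%nat -> x k * x k <= nrm n x.
Proof. intros. apply (rsum_term n (fun i => x i * x i)); auto. intros; nra. Qed.

Lemma nrm_zero n x : nrm n x <= 0 -> forall i, (i < n)%nat -> x i = 0.
Proof.
  intros H i Hi. assert (x i * x i = 0).
  { apply (rsum_zero_inv n (fun i => x i * x i)); auto. intros; nra. }
  nra.
Qed.

Lemma qf_zero n Q x : (forall i, (i < n)%nat -> x i = 0) -> qf n Q x = 0.
Proof.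
  intros H. unfold qf. rewrite (rsum_ext n _ (fun _ => 0)); [apply rsum_zero|].
  intros i Hi. rewrite H by auto. lra.
Qed.

Lemma qf_bound n Q x :
  qf n Q x <= rsum n (fun i => rsum n (fun j => Rabs (Q i j))) * nrm n x.
Proof.
  unfold qf, mv. rewrite <- rsum_scalr. apply rsum_le. intros i Hi.
  rewrite <- rsum_scal, <- rsum_scalr. apply rsum_le. intros j Hj.
  assert (Hi2 := sq_le_nrm n x i Hi). assert (Hj2 := sq_le_nrm n x j Hj).
  assert (Hii : Rabs (x i) * Rabs (x i) = x i * x i) by (rewrite <- Rabs_mult; apply Rabs_right; nra).
  assert (Hjj : Rabs (x j) * Rabs (x j) = x j * x j) by (rewrite <- Rabs_mult; apply Rabs_right; nra).
  assert (Habs : Rabs (x i) * Rabs (x j) <= nrm n x)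
    by (pose proof (pow2_ge_0 (Rabs (x i) - Rabs (x j))); nra).
  eapply Rle_trans; [apply Rle_abs|].
  rewrite !Rabs_mult.
  pose proof (Rabs_pos (Q i j)). pose proof (Rabs_pos (x i)). pose proof (Rabs_pos (x j)).
  nra.
Qed.

Lemma qf_line n P x t j : symm n P -> (j < n)%nat ->
  qf n P (fun k => x k + t * basis_vec j k) = qf n P x + 2 * t * mv n P x j + t * t * P j j.
Proof.
  intros Hs Hj.
  assert (Hm : forall i, (i < n)%nat ->
            mv n P (fun k => x k + t * basis_vec j k) i = mv n P x i + t * P i j).
  { intros i Hi. unfold mv.
    rewrite (rsum_ext n _ (fun k => P i k * x k + t * (if Nat.eqb k j then P i k else 0))).
    - rewrite rsum_plus, rsum_scal, rsum_single by auto. reflexivity.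
    - intros k Hk. unfold basis_vec. destruct (Nat.eqb k j); ring. }
  unfold qf.
  rewrite (rsum_ext n _ (fun i => x i * mv n P x i + t * (P j i * x i)
        + t * (if Nat.eqb i j then mv n P x i else 0)
        + t * t * (if Nat.eqb i j then P i j else 0))).
  - rewrite !rsum_plus, !rsum_scal, !rsum_single by auto. unfold mv. lra.
  - intros i Hi. rewrite Hm by auto. unfold basis_vec. rewrite (Hs i j) by auto.
    destruct (Nat.eqb_spec i j); [subst|]; ring.
Qed.

(* Cauchy-Schwarz for a positive semidefinite symmetric P:
   (P x)_j ^ 2 <= P_jj (x^T P x). *)
Lemma psd_row_bound n P x j : symm n P -> (forall z, 0 <= qf n P z) -> (j < n)%nat ->
  mv n P x j * mv n P x j <= P j j * qf n P x.
Proof.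
  intros Hs Hp Hj.
  set (y := mv n P x j). set (q := qf n P x). set (d := P j j).
  assert (Hpoly : forall t, 0 <= q + 2 * t * y + t * t * d).
  { intros t. unfold q, y, d. rewrite <- (qf_line n P x t j Hs Hj). apply Hp. }
  assert (Hd : 0 <= d).
  { pose proof (qf_line n P (fun _ => 0) 1 j Hs Hj) as E.
    cbv beta in E. rewrite (qf_zero n P (fun _ => 0)) in E by auto.
    assert (Hmv0 : mv n P (fun _ => 0) j = 0)
      by (unfold mv; rewrite (rsum_ext n _ (fun _ => 0)); [apply rsum_zero|intros; ring]).
    pose proof (Hp (fun k => 0 + 1 * basis_vec j k)). unfold d. lra. }
  destruct (Rle_lt_or_eq_dec 0 d Hd) as [Hdp|Hd0].
  - pose proof (Hpoly (- y / d)) as H.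
    replace (q + 2 * (- y / d) * y + - y / d * (- y / d) * d) with (q - y * y / d) in H
      by (field; lra).
    assert (y * y = d * (y * y / d)) by (field; lra). nra.
  - rewrite <- Hd0 in *. destruct (Req_dec y 0) as [Hy|Hy]; [rewrite Hy; lra|].
    pose proof (Hpoly (- (q + 1) / (2 * y))) as H.
    replace (q + 2 * (- (q + 1) / (2 * y)) * y + - (q + 1) / (2 * y) * (- (q + 1) / (2 * y)) * 0)
      with (-1) in H by (field; auto). lra.
Qed.

(* A positive semidefinite form with a left-invertible matrix is coercive:
   x = N (P x) and the row bound on P x control every coordinate of x. *)
Lemma psd_invertible_coercive n P N : symm n P -> (forall z, 0 <= qf n P z) ->
  (forall x i, (i < n)%nat -> x i = rsum n (fun j => N i j * mv n P x j)) ->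
  exists C, 0 < C /\ forall x, nrm n x <= C * qf n P x.
Proof.
  intros Hs Hp HN.
  set (Dm := rsum n (fun j => Rabs (P j j))).
  set (A := fun i => rsum n (fun j => Rabs (N i j))).
  assert (HDm : 0 <= Dm) by (apply rsum_nonneg; intros; apply Rabs_pos).
  assert (HAA : 0 <= rsum n (fun i => A i * A i)) by (apply rsum_nonneg; intros; nra).
  exists (rsum n (fun i => A i * A i) * Dm + 1). split; [nra|].
  intros x. set (q := qf n P x). assert (Hq : 0 <= q) by apply Hp.
  set (r := sqrt (Dm * q)).
  assert (Hr : 0 <= r) by apply sqrt_pos.
  assert (Hr2 : r * r = Dm * q) by (apply sqrt_sqrt; nra).
  assert (Hrow : forall j, (j < n)%nat -> Rabs (mv n P x j) <= r).
  { intros j Hj. pose proof (psd_row_bound n P x j Hs Hp Hj) as Hcs.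
    assert (P j j <= Dm).
    { eapply Rle_trans; [apply Rle_abs|].
      apply (rsum_term n (fun j => Rabs (P j j))); auto. intros; apply Rabs_pos. }
    unfold r. rewrite <- sqrt_Rsqr_abs. apply sqrt_le_1_alt. unfold Rsqr. fold q in Hcs. nra. }
  assert (Hcoord : forall i, (i < n)%nat -> x i * x i <= A i * A i * (Dm * q)).
  { intros i Hi. rewrite (HN x i Hi).
    set (y := rsum n (fun j => N i j * mv n P x j)).
    assert (Hy : Rabs y <= A i * r).
    { unfold y. eapply Rle_trans; [apply rsum_abs|]. unfold A. rewrite <- rsum_scalr.
      apply rsum_le. intros j Hj. rewrite Rabs_mult.
      apply Rmult_le_compat_l; [apply Rabs_pos|]. apply Hrow; auto. }
    pose proof (Rabs_pos y).
    assert (y * y = Rabs y * Rabs y) by (rewrite <- Rabs_mult; symmetry; apply Rabs_right; nra).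
    nra. }
  unfold nrm. eapply Rle_trans; [apply rsum_le; exact Hcoord|].
  rewrite rsum_scalr. nra.
Qed.

Lemma rayleigh_sup n Q u : 0 < nrm n u ->
  exists m, (forall x, qf n Q x <= m * nrm n x) /\
    forall eps, 0 < eps -> exists x, 0 < nrm n x /\ m * nrm n x - qf n Q x < eps * nrm n x.
Proof.
  intros Hu.
  set (E := fun r => exists x, 0 < nrm n x /\ r = qf n Q x / nrm n x).
  assert (HB : bound E).
  { exists (rsum n (fun i => rsum n (fun j => Rabs (Q i j)))). intros r [x [Hx ->]].
    apply Rmult_le_reg_r with (nrm n x); auto.
    unfold Rdiv. rewrite Rmult_assoc, Rinv_l by lra. rewrite Rmult_1_r. apply qf_bound. }
  destruct (completeness E HB (ex_intro _ _ (ex_intro _ u (conj Hu eq_refl))))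
    as [m [Hub Hlub]].
  exists m. split.
  - intros x. destruct (Rle_lt_or_eq_dec 0 (nrm n x) (nrm_nonneg n x)) as [Hp|H0].
    + assert (qf n Q x / nrm n x <= m) by (apply Hub; exists x; auto).
      apply Rmult_le_compat_r with (r := nrm n x) in H; [|lra].
      unfold Rdiv in H. rewrite Rmult_assoc, Rinv_l in H by lra. lra.
    + rewrite qf_zero; [rewrite <- H0; lra|]. apply nrm_zero. lra.
  - intros eps He. apply NNPP. intros Hn.
    assert (Hup : is_upper_bound E (m - eps)).
    { intros r [x [Hx ->]]. apply NNPP. intros Hc. apply Hn. exists x. split; auto.
      assert (m - eps < qf n Q x / nrm n x) by lra.
      apply Rmult_lt_compat_r with (r := nrm n x) in H; auto.
      unfold Rdiv in H. rewrite Rmult_assoc, Rinv_l in H by lra. lra. }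
    apply Hlub in Hup. lra.
Qed.

(* A symmetric matrix has an eigenvalue m dominating its Rayleigh quotient:
   m I - Q is positive semidefinite, and it cannot be invertible since it
   would then be coercive, contradicting that m is the supremum. *)
Lemma top_eigenvalue n Q u : symm n Q -> 0 < nrm n u ->
  exists m, is_eigenvalue n Q m /\ forall x, qf n Q x <= m * nrm n x.
Proof.
  intros Hs Hu.
  destruct (rayleigh_sup n Q u Hu) as [m [Hmax Happ]].
  exists m. split; [|exact Hmax].
  set (P := fun i j => (if Nat.eqb i j then m else 0) - Q i j).
  assert (HsP : symm n P).
  { intros i j Hi Hj. unfold P. rewrite Hs, Nat.eqb_sym by auto. reflexivity. }
  assert (HmvP : forall x i, (i < n)%nat -> mv n P x i = m * x i - mv n Q x i).
  { intros x i Hi. unfold mv, P.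
    rewrite (rsum_ext n _ (fun j => (if Nat.eqb j i then m * x j else 0) - Q i j * x j)).
    - rewrite rsum_minus, rsum_single by auto. reflexivity.
    - intros j Hj. rewrite Nat.eqb_sym. destruct (Nat.eqb j i); ring. }
  assert (HqP : forall x, qf n P x = m * nrm n x - qf n Q x).
  { intros x. unfold qf. rewrite (rsum_ext n _ (fun i => m * (x i * x i) - x i * mv n Q x i)).
    - rewrite rsum_minus, rsum_scal. reflexivity.
    - intros i Hi. rewrite HmvP by auto. ring. }
  assert (Hpsd : forall z, 0 <= qf n P z) by (intros z; rewrite HqP; specialize (Hmax z); lra).
  destruct (MatrixFacts.singular_or_invertible n P) as [[x [Hx Hk]] | [N HN]].
  - exists x. split; auto. intros i Hi. specialize (Hk i Hi).
    change (mv n P x i = 0) in Hk. rewrite HmvP in Hk by auto.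
    change (mv n Q x i = m * x i). lra.
  - exfalso.
    destruct (psd_invertible_coercive n P N HsP Hpsd HN) as [C [HC Hcoer]].
    destruct (Happ (/ (2 * C))) as [x [Hx Hlt]]; [apply Rinv_0_lt_compat; lra|].
    specialize (Hcoer x). rewrite HqP in Hcoer.
    assert (C * (m * nrm n x - qf n Q x) < C * (/ (2 * C) * nrm n x))
      by (apply Rmult_lt_compat_l; lra).
    replace (C * (/ (2 * C) * nrm n x)) with (nrm n x / 2) in H by (field; lra).
    lra.
Qed.

Lemma rayleigh_le_radius n Q rho x : symm n Q -> is_spectral_radius n Q rho ->
  qf n Q x <= rho * nrm n x.
Proof.
  intros Hs [_ Hrho].
  destruct (Rle_lt_or_eq_dec 0 (nrm n x) (nrm_nonneg n x)) as [Hx|H0].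
  - destruct (top_eigenvalue n Q x Hs Hx) as [m [Hm Hmax]].
    pose proof (Hrho m Hm). pose proof (Rle_abs m). pose proof (Hmax x). nra.
  - rewrite qf_zero; [rewrite <- H0; lra|]. apply nrm_zero. lra.
Qed.

Lemma radius_ge_supervector n Q rho lam u e :
  (1 <= n)%nat -> symm n Q -> is_spectral_radius n Q rho ->
  (forall i, (i < n)%nat -> 0 < u i) -> (forall i, (i < n)%nat -> 0 <= e i) ->
  (forall i, (i < n)%nat -> mv n Q u i = lam * u i + e i) ->
  lam <= rho /\ (rho = lam -> forall i, (i < n)%nat -> e i = 0).
Proof.
  intros Hn Hs Hrho Hu He HQu.
  assert (Hnn : forall i, (i < n)%nat -> 0 <= u i * e i)
    by (intros i Hi; pose proof (Hu i Hi); pose proof (He i Hi); nra).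
  assert (Hqf : qf n Q u = lam * nrm n u + rsum n (fun i => u i * e i)).
  { unfold qf, nrm. rewrite <- rsum_scal, <- rsum_plus. apply rsum_ext.
    intros i Hi. rewrite HQu by auto. ring. }
  assert (Hnu : 0 < nrm n u)
    by (pose proof (sq_le_nrm n u 0 ltac:(lia)); pose proof (Hu 0%nat ltac:(lia)); nra).
  pose proof (rsum_nonneg n _ Hnn) as Hsum.
  pose proof (rayleigh_le_radius n Q rho u Hs Hrho) as Hray. rewrite Hqf in Hray.
  split.
  - apply Rmult_le_reg_r with (nrm n u); auto. lra.
  - intros Heq i Hi. subst rho.
    pose proof (rsum_zero_inv n _ Hnn ltac:(lra) i Hi) as Hz.
    pose proof (Hu i Hi). apply Rmult_integral in Hz. destruct Hz; [lra|auto].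
Qed.

Lemma max_index (f : nat -> R) n : (1 <= n)%nat ->
  exists i, (i < n)%nat /\ forall j, (j < n)%nat -> f j <= f i.
Proof.
  induction n; intros H; [lia|]. destruct (Nat.eq_dec n 0) as [->|Hn].
  - exists 0%nat. split; [lia|]. intros j Hj. assert (j = 0%nat) by lia. subst; lra.
  - destruct IHn as [i [Hi Hm]]; [lia|]. destruct (Rle_dec (f n) (f i)).
    + exists i. split; [lia|]. intros j Hj. destruct (Nat.eq_dec j n); [subst; auto|]. apply Hm; lia.
    + exists n. split; [lia|]. intros j Hj. destruct (Nat.eq_dec j n); [subst; lra|].
      specialize (Hm j ltac:(lia)). lra.
Qed.

(* Upper comparison: a positive eigenvector of a nonnegative matrix carries
   the spectral radius.  Compare |x_i| / u_i at its maximum for any eigenvector x. *)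
Lemma radius_le_positive_eigenvector n Q rho lam u :
  (forall i j, (i < n)%nat -> (j < n)%nat -> 0 <= Q i j) ->
  (forall i, (i < n)%nat -> 0 < u i) ->
  (forall i, (i < n)%nat -> mv n Q u i = lam * u i) ->
  is_spectral_radius n Q rho -> rho <= lam.
Proof.
  intros HQ Hu HQu [[mu [[x [[k0 [Hk0 Hx0]] Hxe]] <-]] _].
  set (y := fun k => Rabs (x k) / u k).
  assert (Hyu : forall k, (k < n)%nat -> Rabs (x k) = y k * u k)
    by (intros k Hk; unfold y; pose proof (Hu k Hk); field; lra).
  destruct (max_index y n ltac:(lia)) as [i0 [Hi0 Hymax]].
  assert (Hy0 : 0 < y k0)
    by (unfold y, Rdiv; apply Rmult_lt_0_compat;
        [apply Rabs_pos_lt; auto | apply Rinv_0_lt_compat; auto]).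
  pose proof (Hymax k0 Hk0).
  assert (Hxi0 : 0 < Rabs (x i0)) by (rewrite Hyu by auto; pose proof (Hu i0 Hi0); nra).
  assert (Hbound : Rabs mu * Rabs (x i0) <= lam * Rabs (x i0)).
  { rewrite <- Rabs_mult, <- (Hxe i0 Hi0).
    eapply Rle_trans; [apply rsum_abs|].
    apply Rle_trans with (rsum n (fun j => Q i0 j * (y i0 * u j))).
    - apply rsum_le. intros j Hj. rewrite Rabs_mult, Rabs_right by (apply Rle_ge; auto).
      rewrite Hyu by auto. apply Rmult_le_compat_l; auto.
      apply Rmult_le_compat_r; [pose proof (Hu j Hj); lra|]. apply Hymax; auto.
    - rewrite (rsum_ext n _ (fun j => y i0 * (Q i0 j * u j))) by (intros; ring).
      rewrite rsum_scal. change (rsum n (fun j => Q i0 j * u j)) with (mv n Q u i0).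
      rewrite HQu, (Hyu i0 Hi0) by auto. lra. }
  apply Rmult_le_reg_r with (Rabs (x i0)); auto.
Qed.

Lemma least_index (P : nat -> Prop) N : P N ->
  exists t, (t <= N)%nat /\ P t /\ forall k, (k < t)%nat -> ~ P k.
Proof.
  induction N as [N IH] using lt_wf_ind. intros HP.
  destruct (classic (exists k, (k < N)%nat /\ P k)) as [[k [Hk Pk]]|Hno].
  - destruct (IH k Hk Pk) as [t [Ht [Pt Hl]]]. exists t. split; [lia|auto].
  - exists N. split; [lia|]. split; auto. intros k Hk Pk. apply Hno. eauto.
Qed.

(* In the application D_i is the
   transmission and W_ij = d_ij D_j^alpha / D_i^alpha, so rowsum is s. *)
Section TestVector.
Variables (n : nat) (D : nat -> R) (W : nat -> nat -> R) (S T : R).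
Hypothesis n_pos : (1 <= n)%nat.
Hypothesis T_pos : 0 < T.
Hypothesis S_le_D : forall i, (i < n)%nat -> S <= D i.
Hypothesis W_diag : forall i, W i i = 0.
Hypothesis T_le_W : forall i j, (i < n)%nat -> (j < n)%nat -> i <> j -> T <= W i j.

Definition rowsum (i : nat) : R := rsum n (fun j => W i j) + D i.

Hypothesis rowsum_sorted : forall i j, (i <= j)%nat -> (j < n)%nat -> rowsum j <= rowsum i.

Definition excess (k : nat) : R := rowsum k - rowsum (n - 1).

Definition lam : R :=
  (rowsum (n - 1) + S - T
   + sqrt ((rowsum (n - 1) - S + T) ^ 2
           + 4 * T * rsum (n - 1) (fun k => rowsum k - rowsum (n - 1)))) / 2.

Definition shift : R := lam - S + T.

Definition test_vec (k : nat) : R := 1 + excess k / shift.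

Definition defect (i : nat) : R :=
  D i * test_vec i + rsum n (fun j => W i j * test_vec j) - lam * test_vec i.

Definition wgap (i j : nat) : R := W i j + (if Nat.eqb j i then T else 0) - T.

Lemma wgap_nonneg i j : (i < n)%nat -> (j < n)%nat -> 0 <= wgap i j.
Proof.
  intros Hi Hj. unfold wgap. destruct (Nat.eqb_spec j i) as [->|Hne].
  - rewrite W_diag. lra.
  - pose proof (T_le_W i j Hi Hj ltac:(auto)). lra.
Qed.

Lemma excess_nonneg k : (k < n)%nat -> 0 <= excess k.
Proof. intros Hk. unfold excess. pose proof (rowsum_sorted k (n - 1) ltac:(lia) ltac:(lia)). lra. Qed.

Lemma rsum_excess : rsum n excess = rsum (n - 1) (fun k => rowsum k - rowsum (n - 1)).
Proof.
  replace n with (Datatypes.S (n - 1)) at 1 by lia. simpl.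
  unfold excess at 2. rewrite Rminus_diag, Rplus_0_r. reflexivity.
Qed.

(* lam is the larger root of (x - s_n)(x - S + T) = T * sum_k (s_k - s_n). *)
Lemma lam_equation : 0 < shift /\ (lam - rowsum (n - 1)) * shift = T * rsum n excess.
Proof.
  set (a := rowsum (n - 1)).
  set (X := rsum n excess).
  assert (HX : 0 <= X) by (apply rsum_nonneg; exact excess_nonneg).
  assert (HaS : S <= a).
  { assert (0 <= rsum n (fun j => W (n - 1)%nat j)).
    { apply rsum_nonneg. intros j Hj. destruct (Nat.eq_dec (n - 1) j) as [<-|Hne].
      - rewrite W_diag. lra.
      - pose proof (T_le_W (n - 1) j ltac:(lia) Hj Hne). lra. }
    pose proof (S_le_D (n - 1) ltac:(lia)). unfold a, rowsum. lra. }
  set (b := a - S + T).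
  set (r := sqrt (b ^ 2 + 4 * T * X)).
  assert (Hr : 0 <= r) by apply sqrt_pos.
  assert (Hr2 : r * r = b ^ 2 + 4 * T * X) by (apply sqrt_sqrt; nra).
  assert (Hlam : lam = (a + S - T + r) / 2) by (unfold lam, r, b, a; rewrite <- rsum_excess; reflexivity).
  unfold shift. rewrite Hlam. split; [unfold b in *; lra|].
  replace (((a + S - T + r) / 2 - a) * ((a + S - T + r) / 2 - S + T))
    with ((r * r - b ^ 2) / 4) by (unfold b; field).
  rewrite Hr2. field.
Qed.

Lemma test_vec_pos k : (k < n)%nat -> 0 < test_vec k.
Proof.
  intros Hk. destruct lam_equation as [Hc _]. pose proof (excess_nonneg k Hk).
  assert (0 <= excess k / shift)
    by (unfold Rdiv; apply Rmult_le_pos; [lra|left; apply Rinv_0_lt_compat; lra]).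
  unfold test_vec. lra.
Qed.

Lemma defect_identity i : (i < n)%nat ->
  shift * defect i = (D i - S) * excess i + rsum n (fun j => wgap i j * excess j).
Proof.
  intros Hi. destruct lam_equation as [Hc Hkey].
  assert (Hgap : rsum n (fun j => wgap i j * excess j)
                 = rsum n (fun j => W i j * excess j) + T * excess i - T * rsum n excess).
  { rewrite (rsum_ext n _ (fun j => (W i j * excess j
                 + T * (if Nat.eqb j i then excess j else 0)) - T * excess j)).
    - rewrite rsum_minus, rsum_plus, !rsum_scal, rsum_single by auto. reflexivity.
    - intros j Hj. unfold wgap. destruct (Nat.eqb j i); ring. }
  assert (Hrow : shift * rsum n (fun j => W i j * test_vec j)
                 = shift * rsum n (fun j => W i j) + rsum n (fun j => W i j * excess j)).
  { rewrite <- !rsum_scal, <- rsum_plus. apply rsum_ext. intros j Hj.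
    unfold test_vec. field. lra. }
  assert (Hv : shift * test_vec i = shift + excess i) by (unfold test_vec; field; lra).
  assert (Hex : excess i = rsum n (fun j => W i j) + D i - rowsum (n - 1)) by reflexivity.
  rewrite Hgap, <- Hkey.
  replace (shift * defect i)
    with (D i * (shift * test_vec i) + shift * rsum n (fun j => W i j * test_vec j)
          - lam * (shift * test_vec i)) by (unfold defect; ring).
  rewrite Hrow, Hv, Hex. unfold shift. ring.
Qed.

Lemma defect_nonneg i : (i < n)%nat -> 0 <= defect i.
Proof.
  intros Hi. destruct lam_equation as [Hc _].
  pose proof (defect_identity i Hi). pose proof (S_le_D i Hi). pose proof (excess_nonneg i Hi).
  assert (0 <= rsum n (fun j => wgap i j * excess j)).
  { apply rsum_nonneg. intros j Hj.
    apply Rmult_le_pos; [apply wgap_nonneg | apply excess_nonneg]; auto. }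
  assert (0 <= shift * defect i) by nra. nra.
Qed.

Lemma defect_zero_iff :
  (forall i, (i < n)%nat -> defect i = 0) <->
  ((forall k, (k < n)%nat -> rowsum k = rowsum 0%nat) \/
   (exists t, (1 <= t)%nat /\ (t <= n - 1)%nat /\
      (forall k, (k < t)%nat -> D k = S) /\
      (forall k l, (k < n)%nat -> (l < t)%nat -> k <> l -> W k l = T) /\
      (forall k, (t <= k)%nat -> (k < n)%nat -> rowsum k = rowsum t))).
Proof.
  destruct lam_equation as [Hc _].
  split.
  - intros H0.
    (* every nonnegative term of the defect identity vanishes *)
    assert (Hparts : forall i, (i < n)%nat ->
              (D i - S) * excess i = 0 /\ forall j, (j < n)%nat -> wgap i j * excess j = 0).
    { intros i Hi. pose proof (defect_identity i Hi) as Hid. rewrite H0, Rmult_0_r in Hid by auto.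
      pose proof (S_le_D i Hi). pose proof (excess_nonneg i Hi).
      assert (Hnn : forall j, (j < n)%nat -> 0 <= wgap i j * excess j)
        by (intros; apply Rmult_le_pos; [apply wgap_nonneg | apply excess_nonneg]; auto).
      pose proof (rsum_nonneg n _ Hnn).
      assert (0 <= (D i - S) * excess i) by (apply Rmult_le_pos; lra).
      split; [lra|]. apply (rsum_zero_inv n _ Hnn). lra. }
    destruct (Req_dec (excess 0%nat) 0) as [Hw0|Hw0].
    + left. intros k Hk. pose proof (rowsum_sorted 0 k ltac:(lia) Hk).
      pose proof (excess_nonneg k Hk). unfold excess in *. lra.
    + right.
      assert (Hlast : excess (n - 1) = 0) by (unfold excess; ring).
      destruct (least_index (fun k => excess k = 0) (n - 1) Hlast) as [t [Ht [Hwt Hlt]]].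
      assert (Ht1 : (1 <= t)%nat) by (destruct t; [contradiction|lia]).
      exists t. repeat split; auto.
      * intros k Hk. destruct (Hparts k ltac:(lia)) as [H1 _].
        apply Rmult_integral in H1. destruct H1 as [H1|H1]; [lra|].
        exfalso. exact (Hlt k Hk H1).
      * intros k l Hk Hl Hkl. destruct (Hparts k Hk) as [_ H1]. specialize (H1 l ltac:(lia)).
        apply Rmult_integral in H1. destruct H1 as [H1|H1].
        -- unfold wgap in H1. destruct (Nat.eqb_spec l k); [lia|]. lra.
        -- exfalso. exact (Hlt l Hl H1).
      * intros k Hk1 Hk2. pose proof (rowsum_sorted t k Hk1 Hk2).
        pose proof (excess_nonneg k Hk2). unfold excess in *. lra.
  - intros Hcond i Hi.
    assert (Hz : shift * defect i = 0).
    { rewrite defect_identity by auto. destruct Hcond as [Hall|[t [Ht1 [Htn [HDt [HWt Hst]]]]]].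
      - assert (Hw0 : forall k, (k < n)%nat -> excess k = 0)
          by (intros k Hk; unfold excess; rewrite Hall, (Hall (n - 1)%nat) by lia; ring).
        rewrite (Hw0 i Hi).
        rewrite (rsum_ext n _ (fun _ => 0)), rsum_zero; [ring|].
        intros j Hj. rewrite Hw0 by auto. ring.
      - assert (Hw0 : forall k, (t <= k)%nat -> (k < n)%nat -> excess k = 0)
          by (intros k Hk1 Hk2; unfold excess; rewrite Hst, (Hst (n - 1)%nat) by lia; ring).
        rewrite (rsum_ext n _ (fun _ => 0)), rsum_zero.
        + destruct (Nat.lt_ge_cases i t) as [Hit|Hit].
          * rewrite (HDt i Hit). ring.
          * rewrite (Hw0 i Hit Hi). ring.
        + intros j Hj. destruct (Nat.lt_ge_cases j t) as [Hjt|Hjt].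
          * unfold wgap. destruct (Nat.eqb_spec j i) as [->|Hne].
            -- rewrite W_diag. ring.
            -- rewrite (HWt i j Hi Hjt) by auto. ring.
          * rewrite (Hw0 j Hjt Hj). ring. }
    apply Rmult_integral in Hz. destruct Hz; [lra|auto].
Qed.

End TestVector.

Lemma existsb_seq f n : existsb f (seq 0 n) = true <-> exists m, (m < n)%nat /\ f m = true.
Proof.
  rewrite existsb_exists. split.
  - intros [m [Hm Hf]]. apply in_seq in Hm. exists m. split; [lia|auto].
  - intros [m [Hm Hf]]. exists m. split; [apply in_seq; lia|auto].
Qed.

(* Graph distances are symmetric: walks can be reversed. *)
Section Distance.
Variables (adj : nat -> nat -> bool) (n : nat).
Hypothesis adj_sym : forall i j, (i < n)%nat -> (j < n)%nat -> adj i j = adj j i.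

Lemma reach_step_left k i j : reachb adj n (S k) i j = true <->
  reachb adj n k i j = true \/
  exists m, (m < n)%nat /\ adj i m = true /\ reachb adj n k m j = true.
Proof.
  simpl. rewrite orb_true_iff, existsb_seq.
  split; intros [H|[m [Hm H]]]; auto; right; exists m; rewrite andb_true_iff in *; tauto.
Qed.

Lemma reach_step_right k : forall i j, (i < n)%nat -> (j < n)%nat ->
  (reachb adj n (S k) i j = true <->
   reachb adj n k i j = true \/
   exists m, (m < n)%nat /\ reachb adj n k i m = true /\ adj m j = true).
Proof.
  induction k; intros i j Hi Hj.
  - rewrite reach_step_left. simpl. split.
    + intros [H|[m [Hm [Ha Hr]]]]; auto. apply Nat.eqb_eq in Hr. subst. right. exists i.
      rewrite Nat.eqb_refl. auto.
    + intros [H|[m [Hm [Hr Ha]]]]; auto. apply Nat.eqb_eq in Hr. subst. right. exists j.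
      rewrite Nat.eqb_refl. auto.
  - rewrite reach_step_left. split.
    + intros [H|[m [Hm [Ha Hr]]]]; [left; auto|].
      apply IHk in Hr; auto. destruct Hr as [Hr|[p [Hp [Hr Ha2]]]].
      * left. apply reach_step_left. right. eauto.
      * right. exists p. repeat split; auto. apply reach_step_left. right. eauto.
    + intros [H|[p [Hp [Hr Ha]]]]; [left; auto|].
      apply reach_step_left in Hr. destruct Hr as [Hr|[m [Hm [Ha2 Hr]]]].
      * left. apply IHk; auto. right. eauto.
      * right. exists m. repeat split; auto. apply IHk; auto. right. eauto.
Qed.

Lemma reach_sym k : forall i j, (i < n)%nat -> (j < n)%nat ->
  reachb adj n k i j = reachb adj n k j i.
Proof.
  induction k; intros i j Hi Hj; [apply Nat.eqb_sym|].
  apply eq_true_iff_eq. rewrite reach_step_left, (reach_step_right k j i Hj Hi), IHk by auto.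
  split; intros [H|[m [Hm [H1 H2]]]]; auto; right; exists m; split; auto.
  - rewrite IHk, adj_sym by auto. auto.
  - rewrite IHk in H1 by auto. rewrite adj_sym in H2 by auto. auto.
Qed.

Lemma first_true_ext f g fuel start : (forall k, f k = g k) ->
  first_true f fuel start = first_true g fuel start.
Proof. revert start. induction fuel; simpl; intros; auto. rewrite H, IHfuel; auto. Qed.

Lemma dist_sym i j : (i < n)%nat -> (j < n)%nat -> Defs.dist adj n i j = Defs.dist adj n j i.
Proof. intros. unfold Defs.dist. apply first_true_ext. intros; apply reach_sym; auto. Qed.

End Distance.

Lemma first_true_ge f fuel start : (start <= first_true f fuel start)%nat.
Proof.
  revert start. induction fuel; simpl; intros; [lia|]. destruct (f start); [lia|].
  specialize (IHfuel (S start)). lia.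
Qed.

Lemma dist_refl adj n i : (1 <= n)%nat -> Defs.dist adj n i i = 0%nat.
Proof. intros. unfold Defs.dist. destruct n; [lia|]. simpl. rewrite Nat.eqb_refl. reflexivity. Qed.

Lemma dist_pos adj n i j : (1 <= n)%nat -> i <> j -> (1 <= Defs.dist adj n i j)%nat.
Proof.
  intros. unfold Defs.dist. destruct n; [lia|]. simpl.
  destruct (Nat.eqb_spec i j); [lia|]. apply first_true_ge.
Qed.

Lemma trans_nonneg adj n i : 0 <= trans adj n i.
Proof. unfold trans. apply rsum_nonneg. intros. apply pos_INR. Qed.

Lemma Rpower_pos x a : 0 < Rpower x a.
Proof. unfold Rpower. apply exp_pos. Qed.

Lemma wgt_mul adj n a i j :
  wgt adj n a i j * Rpower (trans adj n i) a = INR (Defs.dist adj n i j) * Rpower (trans adj n j) a.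
Proof. unfold wgt. pose proof (Rpower_pos (trans adj n i) a). field. lra. Qed.

Lemma wgt_diag adj n a i : (1 <= n)%nat -> wgt adj n a i i = 0.
Proof. intros. unfold wgt. rewrite dist_refl by auto. simpl. lra. Qed.

Lemma wgt_pos adj n a i j : (1 <= n)%nat -> i <> j -> 0 < wgt adj n a i j.
Proof.
  intros. unfold wgt.
  pose proof (Rpower_pos (trans adj n j) a). pose proof (Rpower_pos (trans adj n i) a).
  pose proof (le_INR _ _ (dist_pos adj n i j H H0)). simpl in *.
  unfold Rdiv. apply Rmult_lt_0_compat; [nra|]. apply Rinv_0_lt_compat; auto.
Qed.

Lemma fold_min_le {A} (f : A -> R) d l x : In x l -> fold_right Rmin d (map f l) <= f x.
Proof.
  induction l; simpl; [tauto|]. intros [->|H]; [apply Rmin_l|].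
  eapply Rle_trans; [apply Rmin_r|]. auto.
Qed.

Lemma fold_min_pos {A} (f : A -> R) d l : 0 < d -> (forall x, In x l -> 0 < f x) ->
  0 < fold_right Rmin d (map f l).
Proof. induction l; simpl; intros; auto. apply Rmin_glb_lt; auto. Qed.

Lemma minS_le adj n i : (i < n)%nat -> minS adj n <= trans adj n i.
Proof. intros. unfold minS. apply (fold_min_le (trans adj n)). apply in_seq. lia. Qed.

Lemma minT_le adj n a i j : (i < n)%nat -> (j < n)%nat -> i <> j ->
  minT adj n a <= wgt adj n a i j.
Proof.
  intros. unfold minT. apply (fold_min_le (fun p => wgt adj n a (fst p) (snd p)) _ _ (i, j)).
  apply filter_In. split.
  - apply in_prod; apply in_seq; lia.
  - simpl. destruct (Nat.eqb_spec i j); auto.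
Qed.

Lemma minT_pos adj n a : (2 <= n)%nat -> 0 < minT adj n a.
Proof.
  intros. unfold minT. apply fold_min_pos; [apply wgt_pos; lia|].
  intros [i j] Hin. apply filter_In in Hin. destruct Hin as [_ Hne]. simpl in *.
  apply wgt_pos; [lia|]. destruct (Nat.eqb_spec i j); simpl in Hne; [discriminate|auto].
Qed.

Lemma DQ_symm adj n : (forall i j, (i < n)%nat -> (j < n)%nat -> adj i j = adj j i) ->
  symm n (DQ adj n).
Proof.
  intros Hsym i j Hi Hj. unfold DQ. rewrite (dist_sym adj n Hsym i j Hi Hj), Nat.eqb_sym.
  destruct (Nat.eqb_spec j i); [subst|]; reflexivity.
Qed.

Lemma DQ_nonneg adj n i j : 0 <= DQ adj n i j.
Proof.
  unfold DQ. pose proof (trans_nonneg adj n i). pose proof (pos_INR (Defs.dist adj n i j)).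
  destruct (Nat.eqb i j); lra.
Qed.

Lemma DQ_similarity adj n alpha v i : (i < n)%nat ->
  mv n (DQ adj n) (fun j => Rpower (trans adj n j) alpha * v j) i
  = Rpower (trans adj n i) alpha
    * (trans adj n i * v i + rsum n (fun j => wgt adj n alpha i j * v j)).
Proof.
  intros Hi. unfold mv.
  rewrite (rsum_ext n _ (fun j => (if Nat.eqb j i then trans adj n j * Rpower (trans adj n j) alpha * v j else 0)
                       + Rpower (trans adj n i) alpha * (wgt adj n alpha i j * v j))).
  - rewrite rsum_plus, rsum_single, rsum_scal by auto. ring.
  - intros j Hj. unfold DQ. rewrite Nat.eqb_sym.
    replace (Rpower (trans adj n i) alpha * (wgt adj n alpha i j * v j))
      with (INR (Defs.dist adj n i j) * Rpower (trans adj n j) alpha * v j)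
      by (rewrite <- (wgt_mul adj n alpha i j); ring).
    destruct (Nat.eqb_spec j i); [subst|]; ring.
Qed.

Theorem theorem8 (n : nat) (adj : nat -> nat -> bool) (alpha rho : R) :
  (2 <= n)%nat ->
  (forall i j, (i < n)%nat -> (j < n)%nat -> adj i j = adj j i) ->
  (forall i, (i < n)%nat -> adj i i = false) ->
  connected adj n ->
  (forall i j, (i <= j)%nat -> (j < n)%nat -> sval adj n alpha j <= sval adj n alpha i) ->
  is_spectral_radius n (DQ adj n) rho ->
  let s := sval adj n alpha in
  let S := minS adj n in
  let T := minT adj n alpha in
  let bound :=
    (s (n - 1)%nat + S - T
     + sqrt ((s (n - 1)%nat - S + T) ^ 2
             + 4 * T * rsum (n - 1) (fun k => s k - s (n - 1)%nat))) / 2 in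
  rho >= bound /\
  (rho = bound <->
     ((forall k, (k < n)%nat -> s k = s 0%nat) \/
      (exists t, (1 <= t)%nat /\ (t <= n - 1)%nat /\
         (forall k, (k < t)%nat -> trans adj n k = S) /\
         (forall k l, (k < n)%nat -> (l < t)%nat -> k <> l -> wgt adj n alpha k l = T) /\
         (forall k, (t <= k)%nat -> (k < n)%nat -> s k = s t)))).
Proof.
  intros Hn Hsym _ _ Hsorted Hrho s S T bound.
  set (D := trans adj n). set (W := wgt adj n alpha).
  assert (HT : 0 < T) by (apply minT_pos; auto).
  assert (HS : forall i, (i < n)%nat -> S <= D i) by (intros; apply minS_le; auto).
  assert (HW : forall i, W i i = 0) by (intros; apply wgt_diag; lia).
  assert (HTW : forall i j, (i < n)%nat -> (j < n)%nat -> i <> j -> T <= W i j)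
    by (intros; apply minT_le; auto).
  assert (Hn1 : (1 <= n)%nat) by lia.
  pose proof (defect_nonneg n D W S T Hn1 HT HS HW HTW Hsorted) as HE.
  pose proof (defect_zero_iff n D W S T Hn1 HT HS HW HTW Hsorted) as HEiff.
  set (p := fun i => Rpower (D i) alpha).
  set (u := fun i => p i * test_vec n D W S T i).
  assert (Hu : forall i, (i < n)%nat -> 0 < u i)
    by (intros; apply Rmult_lt_0_compat;
        [apply Rpower_pos | apply (test_vec_pos n D W S T Hn1 HT HS HW HTW Hsorted); auto]).
  assert (HQu : forall i, (i < n)%nat ->
            mv n (DQ adj n) u i = bound * u i + p i * defect n D W S T i).
  { intros i Hi. unfold u, p. rewrite DQ_similarity by auto.
    change bound with (lam n D W S T). unfold defect, D, W. ring. }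
  destruct (radius_ge_supervector n (DQ adj n) rho bound u (fun i => p i * defect n D W S T i)
              Hn1 (DQ_symm adj n Hsym) Hrho Hu) as [Hge Heq]; auto.
  { intros i Hi. apply Rmult_le_pos; [left; apply Rpower_pos | auto]. }
  split; [lra|]. split.
  - intros Hb. apply HEiff. intros i Hi.
    pose proof (Heq Hb i Hi) as H0. apply Rmult_integral in H0.
    destruct H0 as [H0|H0]; [pose proof (Rpower_pos (D i) alpha); unfold p in H0; lra | exact H0].
  - intros Hcond. pose proof (proj2 HEiff Hcond) as Hdef0.
    assert (rho <= bound).
    { apply (radius_le_positive_eigenvector n (DQ adj n) rho bound u); auto.
      - intros; apply DQ_nonneg.
      - intros i Hi. rewrite HQu, Hdef0 by auto. ring. }
    lra.
Qed.
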